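(* If $\mathbf c_1,\mathbf c_2\in\mathrm{GF}(q^m)^n$ and $d_{\mathrm R}(\mathbf c_1,\mathbf c_2)=r$, then for $0\le s\le r$, $$|B_s(\mathbf c_1)\cap B_{r-s}(\mathbf c_2)|=q^{s(r-s)}{r\brack s}.$$
   Context: The rank $\mathrm{rk}(\mathbf x)$ of $\mathbf x\in\mathrm{GF}(q^m)^n$ is the maximum number of its coordinates linearly independent over $\mathrm{GF}(q)$, and $d_{\mathrm R}(\mathbf x,\mathbf y)=\mathrm{rk}(\mathbf x-\mathbf y)$. $B_r(\mathbf x)$ is the set of vectors within rank distance $r$ of $\mathbf x$. ${r\brack s}$ is the Gaussian binomial coefficient, the number of $s$-dimensional subspaces of $\mathrm{GF}(q)^r$. *)

From HB Require Import structures.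
From mathcomp Require Import all_boot all_order all_algebra all_field.
Set Implicit Arguments. Unset Strict Implicit. Unset Printing Implicit Defensive.
Import GRing.Theory.
Local Open Scope ring_scope.

(* Setting: F = GF(q) is a finite field, L = GF(q^m) a finite-dimensional
   field extension of F.  [finvect_type L] is L with its canonical finType
   structure (so that vectors can be counted). *)

Definition fvec (F : finFieldType) (L : fieldExtType F) (n : nat) :=
  {ffun 'I_n -> finvect_type L}.

Definition rk (F : finFieldType) (L : fieldExtType F) (n : nat)
  (x : fvec L n) : nat := \dim <<codom x>>%VS.

Definition dR (F : finFieldType) (L : fieldExtType F) (n : nat)
  (x y : fvec L n) : nat := rk (x - y).

Definition ball (F : finFieldType) (L : fieldExtType F) (n : nat)
  (r : nat) (x : fvec L n) : {set fvec L n} :=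
  [set y | (dR x y <= r)%N].

Fixpoint gbinom (q r s : nat) {struct r} : nat :=
  match r, s with
  | 0, 0 => 1
  | 0, _.+1 => 0
  | _.+1, 0 => 1
  | r'.+1, s'.+1 => gbinom q r' s' + q ^ s'.+1 * gbinom q r' s'.+1
  end%N.

From HB Require Import structures.
From mathcomp Require Import all_boot all_order all_algebra all_field.
From mathcomp Require Import zify ring.
Set Implicit Arguments. Unset Strict Implicit. Unset Printing Implicit Defensive.
Import GRing.Theory.

(* Put e := c1 - c2, of rank r, and V the span of its coordinates.  The map
   y |-> u := c1 - y sends the intersection onto the set of u with
   rk u <= s and rk (e - u) <= r - s.  For such u the spans U, W of the
   coordinates of u and e - u satisfy V = U (+) W with dim U = s, and u is
   recovered as the projection of e onto U along W; conversely every such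
   decomposition arises.  Counting ordered bases of V that are concatenations
   of a basis of U and a basis of W in two ways gives
   q^(s(r-s)) [r s] decompositions. *)

Section QFalling.
Variable q : nat.

Definition qfalling d k := (\prod_(i < k) (q ^ d - q ^ i))%N.

Lemma qfalling_eq0 d k : (d < k)%N -> qfalling d k = 0%N.
Proof. by move=> lt_dk; rewrite /qfalling (bigD1 (Ordinal lt_dk)) //= subnn. Qed.

Lemma qfallingSr d k : qfalling d k.+1 = (qfalling d k * (q ^ d - q ^ k))%N.
Proof. exact: big_ord_recr. Qed.

Lemma qfallingSS d k : qfalling d.+1 k.+1 = ((q ^ d.+1 - 1) * q ^ k * qfalling d k)%N.
Proof.
rewrite /qfalling big_ord_recl -mulnA; congr (_ * _)%N.
have -> : (q ^ k = \prod_(i < k) q)%N by rewrite prod_nat_const card_ord.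
rewrite -big_split /=.
by apply: eq_bigr => i _; rewrite /bump add1n !expnS mulnBr.
Qed.

Lemma qfalling_gt0 d : (1 < q)%N -> (0 < qfalling d d)%N.
Proof. by move=> q_gt1; rewrite prodn_gt0 // => i; rewrite subn_gt0 ltn_exp2l. Qed.

Lemma prod_qpow_shift s t :
  (\prod_(i < t) (q ^ (s + t) - q ^ (s + i)) = q ^ (s * t) * qfalling t t)%N.
Proof.
have -> : (q ^ (s * t) = \prod_(i < t) q ^ s)%N by rewrite prod_nat_const card_ord expnM.
rewrite -big_split /=.
by apply: eq_bigr => i _; rewrite !expnD mulnBr.
Qed.

Lemma gbinom_qfalling r s : (0 < q)%N -> (gbinom q r s * qfalling s s)%N = qfalling r s.
Proof.
move=> q_gt0; elim: r s => [|r IHr] [|s] /=.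
- by rewrite mul1n.
- by rewrite mul0n qfalling_eq0.
- by rewrite /qfalling !big_ord0.
rewrite mulnDl -mulnA IHr !qfallingSS mulnCA IHr qfallingSr.
have [le_sr | lt_rs] := leqP s r; last by rewrite qfalling_eq0 ?muln0.
have qs_gt0 : (1 <= q ^ s.+1)%N by rewrite expn_gt0 q_gt0.
have le_qs_qr : (q ^ s.+1 <= q ^ r.+1)%N by rewrite leq_pexp2l.
have qpow_step : (q ^ s.+1 - 1 + q * (q ^ r - q ^ s) = q ^ r.+1 - 1)%N.
  by rewrite mulnBr -!expnS; lia.
by rewrite -qpow_step [in q ^ s.+1 * _]expnS; ring.
Qed.

End QFalling.

Local Open Scope ring_scope.

Lemma card_set_pair (X Y : finType) (P : X -> Y -> bool) :
  #|[set b : X * Y | P b.1 b.2]| = (\sum_x #|[set y | P x y]|)%N.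
Proof.
rewrite -sum1dep_card -(pair_big_dep xpredT P (fun _ _ => 1%N)) /=.
by apply: eq_bigr => x _; rewrite sum1dep_card.
Qed.

Section FinVectType.
Variables (F : finFieldType) (vT : vectType F).
Local Notation T := (finvect_type vT).
Local Notation q := #|F|.

Definition free_tuples (V : {vspace T}) k :=
  [set t : k.-tuple T | free t && (<<t>> <= V)%VS].

Lemma card_vspaceD (U V : {vspace T}) :
  (U <= V)%VS -> #|[predD V & U]| = (q ^ \dim V - q ^ \dim U)%N.
Proof.
move=> sUV; rewrite -!card_vspace -(cardID U V).
have -> : #|[predI V & U]| = #|U|.
  by apply: eq_card => x; rewrite !inE andb_idl // => /(subvP sUV).
by rewrite addKn.
Qed.

Lemma free_rcons (p : seq T) x : free (rcons p x) = (x \notin <<p>>)%VS && free p.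
Proof. by rewrite (perm_free (permEl (perm_rcons x p))) free_cons. Qed.

Lemma card_free_extensions (V : {vspace T}) (p : seq T) k :
  free p -> (<<p>> <= V)%VS ->
  #|[set t : k.-tuple T | free (p ++ t) && (<<t>> <= V)%VS]| =
  (\prod_(i < k) (q ^ \dim V - q ^ (size p + i)))%N.
Proof.
elim: k p => [|k IHk] p free_p sVp.
  rewrite big_ord0 (@eq_card1 _ [tuple]) // => t.
  by rewrite [t]tuple0 !inE cats0 free_p span_nil sub0v eqxx.
have dim_p : \dim <<p>> = size p by apply/eqP.
rewrite -sum1dep_card (partition_big (@thead _ _) [predD V & <<p>>%VS]) /=;
  last first.
  case/tupleP=> x t; rewrite theadE -cat_rcons span_cons subv_add -memvE.
  by case/andP=> /catl_free; rewrite free_rcons => /andP[-> _] /andP[->].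
rewrite big_ord_recl addn0 -{1}dim_p -card_vspaceD // -sum_nat_const.
apply: eq_bigr => x /andP[xNp xV].
have free_px : free (rcons p x) by rewrite free_rcons xNp.
have sVpx : (<<rcons p x>> <= V)%VS.
  by rewrite -cats1 span_cat subv_add sVp span_seq1 -memvE.
rewrite (eq_bigr (fun i : 'I_k => q ^ \dim V - q ^ (size (rcons p x) + i)))%N; last first.
  by move=> i _; rewrite size_rcons addSnnS.
rewrite -(IHk _ free_px sVpx) -sum1dep_card.
rewrite (reindex (fun t : k.-tuple T => [tuple of x :: t])) /=; last first.
  exists (fun t : k.+1.-tuple T => [tuple of behead t]) => [t _ | t /andP[_ /eqP <-]].
    exact: val_inj.
  by rewrite -tuple_eta.
by apply: eq_bigl => t; rewrite theadE eqxx andbT -cat_rcons span_cons subv_add -memvE xV.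
Qed.

Lemma card_free_tuples V k : #|free_tuples V k| = qfalling q (\dim V) k.
Proof.
have sV0 : (<<[::] : seq T>> <= V)%VS by rewrite span_nil sub0v.
exact: card_free_extensions k (nil_free _) sV0.
Qed.

Lemma free_tuples_span (V : {vspace T}) k (t : k.-tuple T) :
  t \in free_tuples V k -> \dim V = k -> <<t>>%VS = V.
Proof.
rewrite inE => /andP[free_t sVt] dimV.
by apply/eqP; rewrite eqEdim sVt (eqP free_t) size_tuple dimV /=.
Qed.

Lemma memv_span_codom n (x : {ffun 'I_n -> T}) i : x i \in <<codom x>>%VS.
Proof. exact/memv_span/codom_f. Qed.

Lemma span_codomN n (x : {ffun 'I_n -> T}) : <<codom (- x)>>%VS = <<codom x>>%VS.
Proof.
have sub (y : {ffun 'I_n -> T}) : (<<codom (- y)>> <= <<codom y>>)%VS.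
  by apply/span_subvP => _ /codomP[i ->]; rewrite ffunE memvN memv_span_codom.
by apply/subv_anti; rewrite sub -{1}[x]opprK sub.
Qed.

Section Splittings.
Variables (n : nat) (e : {ffun 'I_n -> T}) (s : nat).
Local Notation V := <<codom e>>%VS.
Local Notation r := (\dim V).

Definition rank_splits := [set u : {ffun 'I_n -> T} |
  (\dim <<codom u>> <= s)%N && (\dim <<codom (e - u)%R>> <= r - s)%N].

Definition splitting U W : Prop :=
  [/\ (U + W)%VS = V, (U :&: W)%VS = 0%VS, \dim U = s & \dim W = (r - s)%N].

Definition split_along U W := [ffun i => daddv_pi U W (e i)].

Hypothesis le_s_r : (s <= r)%N.

Lemma rank_splitsP u : u \in rank_splits -> splitting <<codom u>> <<codom (e - u)>>.
Proof.
rewrite inE => /andP[]; set U := <<codom u>>%VS; set W := <<codom (e - u)>>%VS.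
move=> dimU dimW.
have sVUW : (V <= U + W)%VS.
  apply/span_subvP => _ /codomP[i ->].
  have -> : e i = u i + (e - u) i by rewrite !ffunE addrC subrK.
  by rewrite memv_add ?memv_span_codom.
have := dimvS sVUW; have [le_dimUW] := dimv_add_leqif U W.
move=> dim_direct ge_dimUW.
have dimUW : \dim (U + W) = (\dim U + \dim W)%N by lia.
split; try lia.
- by apply/eqP; rewrite eq_sym eqEdim sVUW /=; lia.
- by apply/eqP; rewrite -subv0 -dim_direct dimUW.
Qed.

Lemma split_alongP U W : splitting U W ->
  [/\ split_along U W \in rank_splits,
      <<codom (split_along U W)>>%VS = U & <<codom (e - split_along U W)>>%VS = W].
Proof.
move=> [UWV cap0 dimU dimW].
have piW i : (e - split_along U W) i = daddv_pi W U (e i).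
  apply/eqP; rewrite !ffunE subr_eq addrC daddv_pi_add //.
  by rewrite UWV memv_span_codom.
have sUu : (<<codom (split_along U W)>> <= U)%VS.
  by apply/span_subvP => _ /codomP[i ->]; rewrite ffunE memv_pi.
have sWu : (<<codom (e - split_along U W)>> <= W)%VS.
  by apply/span_subvP => _ /codomP[i ->]; rewrite piW memv_pi.
have u_split : split_along U W \in rank_splits.
  by rewrite inE -dimW -dimU !dimvS.
have [_ _ dimUu dimWu] := rank_splitsP u_split.
by split=> //; apply/eqP; rewrite eqEdim ?sUu ?sWu ?dimUu ?dimWu ?dimU ?dimW /=.
Qed.

Lemma rank_splitsK u : u \in rank_splits ->
  split_along <<codom u>> <<codom (e - u)>> = u.
Proof.
move=> /rank_splitsP[UWV cap0 _ _]; apply/ffunP => i; rewrite ffunE.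
have /directv_add_unique dxUW : directv (<<codom u>> + <<codom (e - u)>>).
  exact/directv_addP.
have := dxUW _ _ _ _ (memv_pi _ <<codom (e - u)>> (e i)) (memv_span_codom u i)
  (memv_pi _ <<codom u>> (e i)) (memv_span_codom (e - u) i).
rewrite daddv_pi_add ?UWV ?memv_span_codom // !ffunE addrC subrK eqxx.
by case/esym/eqP.
Qed.

Definition split_bases := [set b : s.-tuple T * (r - s).-tuple T |
  free (b.1 ++ b.2) && (<<b.1 ++ b.2>> <= V)%VS].

Lemma split_basesP b : b \in split_bases -> splitting <<b.1>> <<b.2>>.
Proof.
rewrite inE => /andP[free_b sVb]; have := free_b.
rewrite cat_free => /and3P[free1 free2 /directv_addP cap0].
split=> //.
- apply/eqP; rewrite -span_cat eqEdim sVb (eqP free_b) size_cat !size_tuple.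
  by rewrite subnKC //=.
- by rewrite (eqP free1) size_tuple.
- by rewrite (eqP free2) size_tuple.
Qed.

Lemma card_split_bases :
  #|split_bases| = (qfalling q r s * (q ^ (s * (r - s)) * qfalling q (r - s) (r - s)))%N.
Proof.
rewrite (card_set_pair (fun (b1 : s.-tuple T) (b2 : (r - s).-tuple T) =>
  free (b1 ++ b2) && (<<b1 ++ b2>> <= V)%VS)).
rewrite -(card_free_tuples V s) -sum_nat_const [RHS]big_mkcond /=.
apply: eq_bigr => b1 _; case: ifPn => [b1_free | b1_not].
  move: (b1_free); rewrite inE => /andP[free1 sV1].
  transitivity #|[set b2 : (r - s).-tuple T | free (b1 ++ b2) && (<<b2>> <= V)%VS]|.
    by apply: eq_card => b2; rewrite !inE span_cat subv_add sV1.
  by rewrite card_free_extensions // size_tuple -prod_qpow_shift subnKC.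
apply: eq_card0 => b2; rewrite !inE; apply: contraNF b1_not.
by case/andP=> /catl_free free1; rewrite span_cat subv_add inE free1 => /andP[].
Qed.

Lemma split_bases_fiber u : u \in rank_splits ->
  [set b in split_bases | split_along <<b.1>> <<b.2>> == u] =
  setX (free_tuples <<codom u>> s) (free_tuples <<codom (e - u)>> (r - s)).
Proof.
move=> u_split; have [UWV cap0 dimU dimW] := rank_splitsP u_split.
apply/setP => -[b1 b2]; rewrite inE in_setX /=; apply/idP/idP.
  case/andP=> b_split /eqP split_u.
  have [_ span1 span2] := split_alongP (split_basesP b_split).
  move: b_split; rewrite inE /= -split_u span1 span2 => /andP[free_b _].
  by rewrite !inE (catl_free free_b) (catr_free free_b) !subvv.
case/andP=> b1_free b2_free.
have span1 := free_tuples_span b1_free dimU.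
have span2 := free_tuples_span b2_free dimW.
rewrite inE /= span1 span2 (rank_splitsK u_split) eqxx andbT.
move: b1_free b2_free; rewrite !inE span_cat span1 span2 UWV !subvv cat_free !andbT.
by move=> -> ->; apply/directv_addP; rewrite span1 span2.
Qed.

Lemma card_split_bases_fibers :
  #|split_bases| = (#|rank_splits| * (qfalling q s s * qfalling q (r - s) (r - s)))%N.
Proof.
rewrite -sum1_card (partition_big (fun b : s.-tuple T * (r - s).-tuple T =>
  split_along <<b.1>> <<b.2>>) (mem rank_splits));
  last by move=> b /split_basesP /split_alongP[].
rewrite -sum_nat_const; apply: eq_bigr => u u_split.
have [_ _ dimU dimW] := rank_splitsP u_split.
by rewrite sum1dep_card split_bases_fiber // cardsX !card_free_tuples dimU dimW.
Qed.

Lemma card_rank_splits : #|rank_splits| = (q ^ (s * (r - s)) * gbinom q r s)%N.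
Proof.
have q_gt1 : (1 < q)%N := finNzRing_gt1 F.
have qf_gt0 : (0 < qfalling q s s * qfalling q (r - s) (r - s))%N.
  by rewrite muln_gt0 !qfalling_gt0.
apply/eqP; rewrite -(eqn_pmul2r qf_gt0) -card_split_bases_fibers card_split_bases.
by rewrite -(gbinom_qfalling r s (ltnW q_gt1)) mulnACA (mulnC (gbinom _ _ _)).
Qed.

End Splittings.

End FinVectType.

Theorem proposition4 (F : finFieldType) (L : fieldExtType F) (n : nat)
  (c1 c2 : fvec L n) (r s : nat) :
  dR c1 c2 = r -> (s <= r)%N ->
  #|ball s c1 :&: ball (r - s) c2| = (#|F| ^ (s * (r - s)) * gbinom #|F| r s)%N.
Proof.
move=> <- le_s_r; rewrite -(card_rank_splits le_s_r).
rewrite -(card_preimset _ (f := fun y : fvec L n => c1 - y)); last first.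
  by move=> y y' /addrI /oppr_inj.
apply: eq_card => y; rewrite !inE /dR /rk.
have -> : c1 - (c1 - y) = y by rewrite opprB addrC subrK.
have -> : c2 - (c1 - y) = - (c1 - c2 - y).
  by rewrite opprB opprD opprB opprK addrAC addrA.
by rewrite span_codomN.
Qed.
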